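(* Let $\frac12<\beta<\frac54$ and $\alpha+\beta=\frac54$, and let $r>\max(2\beta,\beta+1)$. Then there exists a constant $C>0$ such that for all $v\in V^{r-1}$, $\theta\in H^{r-\beta}$, $\phi\in H^{r-\beta-1}$, \[ |\langle\Lambda^{-2\alpha}v\cdot\nabla\theta,\Lambda^{2r-2\beta-2}\phi\rangle|\le C\|v\|_{V^{r-1}}\|\theta\|_{H^{r-\beta}}\|\phi\|_{H^{r-\beta-1}}. \]
   Context: On the torus $\mathbb T=[0,2\pi]^3$, for $s\in\mathbb R$, $H^s$ is the space of real periodic functions/distributions $f=\sum_{k\in\mathbb Z^3\setminus\{0\}}f_ke^{ik\cdot x}$ (zero mean) with $f_{-k}=\overline{f_k}$ and $\|f\|_{H^s}^2=\sum_k|f_k|^2|k|^{2s}<\infty$; $V^s$ is the analogous space of vector fields $w=\sum_{k\neq0}w_ke^{ik\cdot x}$, $w_k\in\mathbb C^3$, $w_{-k}=\overline{w_k}$, $w_k\cdot k=0$ (divergence free, zero mean), with $\|w\|_{V^s}^2=\sum_k|w_k|^2|k|^{2s}$. $\Lambda^s$ is the Fourier multiplier by $|k|^s$. $\langle\cdot,\cdot\rangle$ is the $L^2(\mathbb T)$ scalar product (duality pairing). *)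

From Stdlib Require Import Reals ZArith List.
From Coquelicot Require Export Coquelicot.
Export ListNotations.
Open Scope R_scope.

Definition Z3 := (Z * Z * Z)%type.
Definition z3zero : Z3 := (0%Z, 0%Z, 0%Z).
Definition zopp (k : Z3) : Z3 := let '(a, b, c) := k in ((-a)%Z, (-b)%Z, (-c)%Z).
Definition zsub (k j : Z3) : Z3 :=
  let '(a, b, c) := k in let '(a', b', c') := j in ((a - a')%Z, (b - b')%Z, (c - c')%Z).

Definition znorm (k : Z3) : R :=
  let '(a, b, c) := k in sqrt (IZR a ^ 2 + IZR b ^ 2 + IZR c ^ 2).

(** Symbol of Lambda^s: |k|^s for k <> 0 (value at k = 0 irrelevant: zero mean). *)
Definition Lam (s : R) (k : Z3) : R :=
  if Z.eqb (let '(a, b, c) := k in Z.abs a + Z.abs b + Z.abs c)%Z 0%Z then 0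
  else Rpower (znorm k) s.

Definition zrange (N : nat) : list Z :=
  map (fun n => (Z.of_nat n - Z.of_nat N)%Z) (seq 0 (2 * N + 1)).
Definition cube (N : nat) : list Z3 :=
  flat_map (fun a => flat_map (fun b => map (fun c => (a, b, c)) (zrange N))
                              (zrange N)) (zrange N).
Definition rsum_cube (a : Z3 -> R) (N : nat) : R :=
  fold_right (fun k acc => a k + acc) 0 (cube N).
Definition csum_cube (a : Z3 -> C) (N : nat) : C :=
  fold_right (fun k acc => Cplus (a k) acc) (RtoC 0) (cube N).

(** Absolute summability over Z^3 and the value of a sum over Z^3
    (limit of the cube partial sums; for absolutely summable families this is
    the unconditional sum). *)
Definition abs_summable (a : Z3 -> C) : Prop :=
  exists M : R, forall N, rsum_cube (fun k => Cmod (a k)) N <= M.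
Definition zsumR (a : Z3 -> R) : R := real (Lim_seq (rsum_cube a)).
Definition zsumC (a : Z3 -> C) : C :=
  (real (Lim_seq (fun N => fst (csum_cube a N))),
   real (Lim_seq (fun N => snd (csum_cube a N)))).

(** Scalar H^s: zero mean, real (f_{-k} = conj f_k), sum |f_k|^2 |k|^{2s} < oo. *)
Definition in_H (s : R) (f : Z3 -> C) : Prop :=
  f z3zero = RtoC 0 /\ (forall k, f (zopp k) = Cconj (f k)) /\
  exists M : R, forall N, rsum_cube (fun k => Cmod (f k) ^ 2 * Lam s k ^ 2) N <= M.
Definition Hnorm (s : R) (f : Z3 -> C) : R :=
  sqrt (zsumR (fun k => Cmod (f k) ^ 2 * Lam s k ^ 2)).

Definition vec3 := (C * C * C)%type.
Definition vzero : vec3 := (RtoC 0, RtoC 0, RtoC 0).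
Definition vconj (w : vec3) : vec3 :=
  let '(a, b, c) := w in (Cconj a, Cconj b, Cconj c).
Definition vmod2 (w : vec3) : R :=
  let '(a, b, c) := w in Cmod a ^ 2 + Cmod b ^ 2 + Cmod c ^ 2.
(** bilinear (unconjugated) dot product w . k *)
Definition vdot (w : vec3) (k : Z3) : C :=
  let '(a, b, c) := w in let '(x, y, z) := k in
  Cplus (Cplus (Cmult a (RtoC (IZR x))) (Cmult b (RtoC (IZR y))))
        (Cmult c (RtoC (IZR z))).

(** V^s: zero mean, real, divergence free (w_k . k = 0), finite norm. *)
Definition in_V (s : R) (w : Z3 -> vec3) : Prop :=
  w z3zero = vzero /\ (forall k, w (zopp k) = vconj (w k)) /\
  (forall k, vdot (w k) k = RtoC 0) /\
  exists M : R, forall N, rsum_cube (fun k => vmod2 (w k) * Lam s k ^ 2) N <= M.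
Definition Vnorm (s : R) (w : Z3 -> vec3) : R :=
  sqrt (zsumR (fun k => vmod2 (w k) * Lam s k ^ 2)).

(** Fourier coefficients of (Lambda^{-2 alpha} v) . grad theta :
    at frequency k, the sum over j of |j|^{-2alpha} (v_j . i(k-j)) theta_{k-j}. *)
Definition conv_term (alpha : R) (v : Z3 -> vec3) (theta : Z3 -> C) (k j : Z3) : C :=
  Cmult (RtoC (Lam (-2 * alpha) j))
        (Cmult (Cmult Ci (vdot (v j) (zsub k j))) (theta (zsub k j))).
Definition transport_coef (alpha : R) (v : Z3 -> vec3) (theta : Z3 -> C) (k : Z3) : C :=
  zsumC (conv_term alpha v theta k).

Definition Lam_apply (s : R) (f : Z3 -> C) (k : Z3) : C := Cmult (RtoC (Lam s k)) (f k).

(** L^2(T) pairing on [0,2pi]^3 in Fourier variables: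
    <F, G> = (2 pi)^3 sum_k F_k conj(G_k). *)
Definition l2_integrand (F G : Z3 -> C) (k : Z3) : C := Cmult (F k) (Cconj (G k)).
Definition l2_pair (F G : Z3 -> C) : C :=
  Cmult (RtoC ((2 * PI) ^ 3)) (zsumC (l2_integrand F G)).

From Stdlib Require Import Reals ZArith List Lia Lra Psatz Permutation.
From Coquelicot Require Import Coquelicot.
Open Scope R_scope.

(* Write s = r - beta - 1, e = 1 - r - 2 alpha, a_j = |v_j| |j|^(r-1), b_m = |theta_m| |m|^(r-beta)
   and c_k = |phi_k| |k|^s.  Since |v_j . (k-j)| <= |v_j| |k-j|, the j-th term of the k-th Fourier
   coefficient T_k of Lambda^(-2 alpha) v . grad theta is at most a_j b_(k-j) |j|^e |k-j|^(-s).
   As |k| <= |j| + |k-j| and s + e = beta - 5/2 < 0, the weight W(k,j) = |k|^s |j|^e |k-j|^(-s)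
   satisfies W^2 <= 4^s (|j|^(2e) + |k-j|^(2e)); and 2e = -3 - 2(r - 2 beta) < -3, so
   sum_j W(k,j)^2 is bounded uniformly in k.  Cauchy-Schwarz in j gives
   |k|^s |T_k| <~ (sum_j a_j^2 b_(k-j)^2)^(1/2), and Cauchy-Schwarz in k after exchanging the sums
   bounds sum_k |k|^(2s) |T_k| |phi_k| by
   |a| |b| |c| = |v|_(V^(r-1)) |theta|_(H^(r-beta)) |phi|_(H^(r-beta-1)). *)

Definition lsum {A} (f : A -> R) (L : list A) : R :=
  fold_right (fun x acc => f x + acc) 0 L.

Lemma rsum_cube_lsum f N : rsum_cube f N = lsum f (cube N).
Proof. reflexivity. Qed.

Section Lsum.
Context {A : Type}.
Implicit Types (f g : A -> R) (L M : list A).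

Lemma lsum_cons f x L : lsum f (x :: L) = f x + lsum f L.
Proof. reflexivity. Qed.

Lemma lsum_app f L M : lsum f (L ++ M) = lsum f L + lsum f M.
Proof. induction L; simpl; [ring | rewrite IHL; ring]. Qed.

Lemma lsum_perm f L M : Permutation L M -> lsum f L = lsum f M.
Proof. induction 1; simpl; lra. Qed.

Lemma lsum_le f g L : (forall x, In x L -> f x <= g x) -> lsum f L <= lsum g L.
Proof.
  induction L as [|x L IH]; simpl; intros H; [lra|].
  assert (f x <= g x) by auto. assert (lsum f L <= lsum g L) by auto. lra.
Qed.

Lemma lsum_ext f g L : (forall x, In x L -> f x = g x) -> lsum f L = lsum g L.
Proof.
  induction L as [|x L IH]; simpl; intros H; [reflexivity|].
  rewrite H, IH by auto. reflexivity.
Qed.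

Lemma lsum_nonneg f L : (forall x, In x L -> 0 <= f x) -> 0 <= lsum f L.
Proof.
  induction L as [|x L IH]; simpl; intros H; [lra|].
  assert (0 <= f x) by auto. assert (0 <= lsum f L) by auto. lra.
Qed.

Lemma lsum_scal f c L : lsum (fun x => c * f x) L = c * lsum f L.
Proof. induction L; simpl; [ring | rewrite IHL; ring]. Qed.

Lemma lsum_plus f g L : lsum (fun x => f x + g x) L = lsum f L + lsum g L.
Proof. induction L; simpl; [ring | rewrite IHL; ring]. Qed.

Lemma lsum_abs f L : Rabs (lsum f L) <= lsum (fun x => Rabs (f x)) L.
Proof.
  induction L; simpl; [rewrite Rabs_R0; lra|].
  eapply Rle_trans; [apply Rabs_triang | lra].
Qed.

Lemma lsum_le_incl f L M :
  NoDup L -> incl L M -> (forall x, 0 <= f x) -> lsum f L <= lsum f M.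
Proof.
  intros HL; revert M; induction HL as [|x L xL HL IH]; intros M LM f_ge0.
  - simpl; apply lsum_nonneg; auto.
  - destruct (in_split x M) as (M1 & M2 & ->); [apply LM; left; auto|].
    rewrite <- (lsum_perm f _ _ (Permutation_middle M1 M2 x)); simpl.
    enough (lsum f L <= lsum f (M1 ++ M2)) by lra.
    apply IH; auto. intros y Hy.
    assert (Hy' : In y (M1 ++ x :: M2)) by (apply LM; right; auto).
    rewrite in_app_iff in Hy' |- *. destruct Hy' as [H|[<-|H]]; tauto.
Qed.

Lemma lsum_mult_eq0 f g L :
  lsum (fun x => f x ^ 2) L = 0 -> lsum (fun x => f x * g x) L = 0.
Proof.
  induction L as [|x L IH]; intros H; [reflexivity|].
  rewrite lsum_cons in H |- *.
  assert (0 <= lsum (fun x => f x ^ 2) L) by (apply lsum_nonneg; intros; apply pow2_ge_0).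
  pose proof (pow2_ge_0 (f x)).
  assert (fx0 : f x = 0) by (apply Rsqr_0_uniq; unfold Rsqr; nra).
  rewrite IH, fx0 by lra. ring.
Qed.

Lemma lsum_Cauchy_Schwarz f g L :
  lsum (fun x => f x * g x) L <=
  sqrt (lsum (fun x => f x ^ 2) L) * sqrt (lsum (fun x => g x ^ 2) L).
Proof.
  set (SA := lsum (fun x => f x ^ 2) L). set (SB := lsum (fun x => g x ^ 2) L).
  assert (SA_ge0 : 0 <= SA) by (apply lsum_nonneg; intros; apply pow2_ge_0).
  assert (SB_ge0 : 0 <= SB) by (apply lsum_nonneg; intros; apply pow2_ge_0).
  pose proof (sqrt_pos SA) as sqrtA_ge0. pose proof (sqrt_pos SB) as sqrtB_ge0.
  destruct (Req_dec SA 0) as [SA0|SA0].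
  { rewrite lsum_mult_eq0 by exact SA0. nra. }
  destruct (Req_dec SB 0) as [SB0|SB0].
  { rewrite (lsum_ext _ (fun x => g x * f x)) by (intros; ring).
    rewrite lsum_mult_eq0 by exact SB0. nra. }
  set (a := sqrt SA) in *. set (b := sqrt SB) in *.
  assert (a_pos : 0 < a) by (apply sqrt_lt_R0; lra).
  assert (b_pos : 0 < b) by (apply sqrt_lt_R0; lra).
  assert (a2 : a * a = SA) by (apply sqrt_sqrt; auto).
  assert (b2 : b * b = SB) by (apply sqrt_sqrt; auto).
  assert (Hsum : (2 * a * b) * lsum (fun x => f x * g x) L <= b * b * SA + a * a * SB).
  { unfold SA, SB. rewrite <- !lsum_scal, <- lsum_plus.
    apply lsum_le. intros x _. pose proof (pow2_ge_0 (b * f x - a * g x)). nra. }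
  rewrite a2, b2 in Hsum. apply Rmult_le_reg_l with (2 * a * b); nra.
Qed.

End Lsum.

Lemma lsum_map {A B} (f : B -> R) (h : A -> B) (L : list A) :
  lsum f (map h L) = lsum (fun x => f (h x)) L.
Proof. induction L; simpl; [ring | rewrite IHL; ring]. Qed.

Lemma lsum_flat_map {A B} (f : B -> R) (h : A -> list B) (L : list A) :
  lsum f (flat_map h L) = lsum (fun x => lsum f (h x)) L.
Proof.
  induction L; [reflexivity|].
  cbn [flat_map]. rewrite lsum_app, lsum_cons, IHL. reflexivity.
Qed.

Lemma lsum_swap {A B} (F : A -> B -> R) (L : list A) (M : list B) :
  lsum (fun x => lsum (F x) M) L = lsum (fun y => lsum (fun x => F x y) L) M.
Proof.
  induction L; simpl.
  - induction M; simpl; [ring | rewrite <- IHM; ring].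
  - rewrite IHL, <- lsum_plus. reflexivity.
Qed.

Lemma In_zrange z N : In z (zrange N) <-> (- Z.of_nat N <= z <= Z.of_nat N)%Z.
Proof.
  unfold zrange. rewrite in_map_iff. split.
  - intros (n & <- & Hn). apply in_seq in Hn. lia.
  - intros H. exists (Z.to_nat (z + Z.of_nat N)). split; [lia | apply in_seq; lia].
Qed.

Lemma In_cube a b c N : In (a, b, c) (cube N) <->
  (- Z.of_nat N <= a <= Z.of_nat N)%Z /\ (- Z.of_nat N <= b <= Z.of_nat N)%Z /\
  (- Z.of_nat N <= c <= Z.of_nat N)%Z.
Proof.
  unfold cube. rewrite in_flat_map. split.
  - intros (a' & Ha & H). rewrite in_flat_map in H. destruct H as (b' & Hb & H).
    rewrite in_map_iff in H. destruct H as (c' & E & Hc). inversion E; subst.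
    rewrite !In_zrange in *. tauto.
  - intros (Ha & Hb & Hc). exists a. split; [apply In_zrange; auto|].
    rewrite in_flat_map. exists b. split; [apply In_zrange; auto|].
    rewrite in_map_iff. exists c. split; [auto | apply In_zrange; auto].
Qed.

Lemma zrange_S N : zrange (S N) = ((- Z.of_nat (S N))%Z :: zrange N) ++ [Z.of_nat (S N)].
Proof.
  unfold zrange. replace (2 * S N + 1)%nat with (S (S (2 * N + 1))) by lia.
  rewrite seq_S. cbn [seq]. rewrite <- seq_shift, map_app, <- app_comm_cons, map_cons, map_map.
  rewrite <- !app_comm_cons. apply f_equal2; [lia|]. apply f_equal2.
  - apply map_ext; intros; lia.
  - cbn [map]. f_equal. lia.
Qed.

Lemma NoDup_zrange N : NoDup (zrange N).
Proof. apply FinFun.Injective_map_NoDup; [intros x y H; lia | apply seq_NoDup]. Qed.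

Lemma NoDup_flat_map_disjoint {A B} (f : A -> list B) l :
  NoDup l -> (forall x, NoDup (f x)) -> (forall x y z, In z (f x) -> In z (f y) -> x = y) ->
  NoDup (flat_map f l).
Proof.
  induction 1 as [|x l xl Hl IH]; intros Hf Hdisj; simpl; [constructor|].
  apply NoDup_app; auto. intros z Hz Hz'. apply in_flat_map in Hz'.
  destruct Hz' as (y & Hy & Hz'). assert (x = y) by (eapply Hdisj; eauto). subst; contradiction.
Qed.

Lemma NoDup_cube N : NoDup (cube N).
Proof.
  apply NoDup_flat_map_disjoint; [apply NoDup_zrange| |].
  - intros a. apply NoDup_flat_map_disjoint; [apply NoDup_zrange| |].
    + intros b. apply FinFun.Injective_map_NoDup; [|apply NoDup_zrange].
      intros x y H; inversion H; auto.
    + intros x y z Hx Hy. apply in_map_iff in Hx, Hy.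
      destruct Hx as (c & <- & _). destruct Hy as (c' & E & _). inversion E; auto.
  - intros x y z Hx Hy. apply in_flat_map in Hx, Hy.
    destruct Hx as (b & _ & Hx). destruct Hy as (b' & _ & Hy). apply in_map_iff in Hx, Hy.
    destruct Hx as (c & <- & _). destruct Hy as (c' & E & _). inversion E; auto.
Qed.

Lemma cube_incl N M : (N <= M)%nat -> incl (cube N) (cube M).
Proof. intros H [[a b] c] Hk. apply In_cube in Hk. apply In_cube. lia. Qed.

Lemma incl_cube (L : list Z3) : exists N, incl L (cube N).
Proof.
  induction L as [|[[a b] c] L [N HN]]; [exists 0%nat; intros x []|].
  exists (Nat.max N (Z.to_nat (Z.abs a + Z.abs b + Z.abs c))). intros x [<-|Hx].
  - apply In_cube. lia.
  - eapply cube_incl; [|apply HN; auto]. lia.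
Qed.

Lemma zsub_injective_r k : FinFun.Injective (zsub k).
Proof.
  intros [[a b] c] [[a' b'] c'] H. destruct k as [[x y] z].
  inversion H. f_equal; [f_equal|]; lia.
Qed.

Lemma zsub_injective_l j : FinFun.Injective (fun k => zsub k j).
Proof.
  intros [[a b] c] [[a' b'] c'] H. destruct j as [[x y] z].
  inversion H. f_equal; [f_equal|]; lia.
Qed.

Definition summable_nonneg (f : Z3 -> R) : Prop :=
  (forall k, 0 <= f k) /\ exists B, forall N, rsum_cube f N <= B.

Lemma rsum_cube_le_mono f N M :
  (forall k, 0 <= f k) -> (N <= M)%nat -> rsum_cube f N <= rsum_cube f M.
Proof. intros. apply lsum_le_incl; auto using NoDup_cube, cube_incl. Qed.

Lemma is_lim_seq_zsumR f : summable_nonneg f -> is_lim_seq (rsum_cube f) (zsumR f).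
Proof.
  intros [f_ge0 [B HB]].
  destruct (ex_finite_lim_seq_incr (rsum_cube f) B) as [l Hl]; auto.
  { intros n. apply rsum_cube_le_mono; auto. }
  unfold zsumR. rewrite (is_lim_seq_unique _ _ Hl). exact Hl.
Qed.

Lemma lsum_le_zsumR f L : summable_nonneg f -> NoDup L -> lsum f L <= zsumR f.
Proof.
  intros Hf HL. destruct (incl_cube L) as [N HN].
  change (Rbar_le (lsum f L) (zsumR f)).
  apply is_lim_seq_le_loc with (fun _ => lsum f L) (rsum_cube f);
    [|apply is_lim_seq_const | apply is_lim_seq_zsumR; auto].
  exists N. intros n Hn. eapply Rle_trans; [apply lsum_le_incl; eauto; apply Hf|].
  apply rsum_cube_le_mono; auto. apply Hf.
Qed.

Lemma zsumR_nonneg f : summable_nonneg f -> 0 <= zsumR f.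
Proof. intros Hf. apply (lsum_le_zsumR f []); auto. constructor. Qed.

Lemma lsum_zsumR_le {A} (g : A -> Z3 -> R) L B : (forall x, summable_nonneg (g x)) ->
  (forall N, lsum (fun x => rsum_cube (g x) N) L <= B) -> lsum (fun x => zsumR (g x)) L <= B.
Proof.
  intros Hg HB.
  enough (Hlim : is_lim_seq (fun N => lsum (fun x => rsum_cube (g x) N) L)
                            (lsum (fun x => zsumR (g x)) L))
    by exact (is_lim_seq_le _ _ _ _ HB Hlim (is_lim_seq_const B)).
  clear HB. induction L as [|x L IH]; [apply is_lim_seq_const|].
  apply is_lim_seq_plus'; auto. apply is_lim_seq_zsumR; auto.
Qed.

Lemma Rabs_real_Lim_seq_le (u : nat -> R) B :
  (forall n, Rabs (u n) <= B) -> Rabs (real (Lim_seq u)) <= B.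
Proof.
  intros H.
  assert (H1 : Rbar_le (Lim_seq u) (Lim_seq (fun _ => B))).
  { apply Lim_seq_le_loc. exists 0%nat. intros n _.
    specialize (H n). apply Rabs_le_between in H. lra. }
  assert (H2 : Rbar_le (Lim_seq (fun _ => -B)) (Lim_seq u)).
  { apply Lim_seq_le_loc. exists 0%nat. intros n _.
    specialize (H n). apply Rabs_le_between in H. lra. }
  rewrite Lim_seq_const in H1, H2.
  destruct (Lim_seq u); simpl in *; try contradiction. apply Rabs_le_between. lra.
Qed.

Lemma csum_cube_fst g N : fst (csum_cube g N) = lsum (fun k => fst (g k)) (cube N).
Proof. unfold csum_cube. induction (cube N); simpl; auto. rewrite IHl. reflexivity. Qed.

Lemma csum_cube_snd g N : snd (csum_cube g N) = lsum (fun k => snd (g k)) (cube N).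
Proof. unfold csum_cube. induction (cube N); simpl; auto. rewrite IHl. reflexivity. Qed.

Lemma Cmod_zsumC_le (g : Z3 -> C) B :
  (forall N, rsum_cube (fun k => Cmod (g k)) N <= B) -> Cmod (zsumC g) <= sqrt 2 * B.
Proof.
  intros HB. eapply Rle_trans; [apply Cmod_2Rmax|].
  apply Rmult_le_compat_l; [apply sqrt_pos|]. unfold zsumC; simpl.
  apply Rmax_lub; apply Rabs_real_Lim_seq_le; intros n;
    [rewrite csum_cube_fst | rewrite csum_cube_snd];
    (eapply Rle_trans; [apply lsum_abs|]); (eapply Rle_trans; [|apply (HB n)]);
    apply lsum_le; intros k _; eapply Rle_trans; try apply (Rmax_Cmod (g k));
    [apply Rmax_l | apply Rmax_r].
Qed.

Definition l2_bounded (f : Z3 -> R) (M : R) : Prop :=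
  forall L, NoDup L -> lsum (fun k => f k ^ 2) L <= M ^ 2.

Lemma l2_bounded_comp_inj f M (h : Z3 -> Z3) :
  FinFun.Injective h -> l2_bounded f M -> l2_bounded (fun k => f (h k)) M.
Proof.
  intros h_inj Hf L HL. rewrite <- (lsum_map (fun m => f m ^ 2)).
  apply Hf. apply FinFun.Injective_map_NoDup; auto.
Qed.

Lemma l2_bounded_pointwise f M k : l2_bounded f M -> f k ^ 2 <= M ^ 2.
Proof.
  intros Hf. specialize (Hf [k] (NoDup_cons _ (@in_nil _ k) (NoDup_nil _))).
  rewrite lsum_cons in Hf. simpl in Hf. lra.
Qed.

Lemma lsum_mult_le_l2 f g A B L : 0 <= A -> 0 <= B ->
  l2_bounded f A -> l2_bounded g B -> NoDup L -> lsum (fun k => f k * g k) L <= A * B.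
Proof.
  intros A_ge0 B_ge0 Hf Hg HL. eapply Rle_trans; [apply lsum_Cauchy_Schwarz|].
  rewrite <- (sqrt_pow2 A), <- (sqrt_pow2 B) by auto.
  apply Rmult_le_compat; try apply sqrt_pos; apply sqrt_le_1_alt; auto.
Qed.

Lemma exp_monotone x y : x <= y -> exp x <= exp y.
Proof. intros [H|H]; [left; apply exp_increasing; auto | subst; lra]. Qed.

Lemma Lam_spec k : ((forall s, Lam s k = 0) /\ znorm k = 0) \/
                   (1 <= znorm k /\ forall s, Lam s k = exp (s * ln (znorm k))).
Proof.
  destruct k as [[a b] c]. unfold Lam.
  destruct (Z.eqb_spec (Z.abs a + Z.abs b + Z.abs c) 0) as [E|E].
  - left. split; auto. assert (a = 0 /\ b = 0 /\ c = 0)%Z as (-> & -> & ->) by lia.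
    unfold znorm. rewrite pow_i, !Rplus_0_r by lia. apply sqrt_0.
  - right. split; auto. rewrite <- sqrt_1. apply sqrt_le_1_alt.
    assert (Z.abs a <= a * a /\ Z.abs b <= b * b /\ Z.abs c <= c * c)%Z by (repeat split; nia).
    assert (1 <= a * a + b * b + c * c)%Z by lia.
    apply IZR_le in H0. rewrite !plus_IZR, !mult_IZR in H0. simpl. lra.
Qed.

Lemma Lam_nonneg s k : 0 <= Lam s k.
Proof. destruct (Lam_spec k) as [[H _]|[_ H]]; rewrite H; [lra | left; apply exp_pos]. Qed.

Lemma Lam_plus s t k : Lam s k * Lam t k = Lam (s + t) k.
Proof.
  destruct (Lam_spec k) as [[H _]|[_ H]]; rewrite !H; [ring|].
  rewrite <- exp_plus. f_equal. ring.
Qed.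

Lemma Lam_1 k : Lam 1 k = znorm k.
Proof.
  destruct (Lam_spec k) as [[H H']|[H1 H]]; rewrite H; [auto|].
  rewrite Rmult_1_l, exp_ln; lra.
Qed.

Lemma Lam_le_1 s k : s <= 0 -> Lam s k <= 1.
Proof.
  intros Hs. destruct (Lam_spec k) as [[H _]|[H1 H]]; rewrite H; [lra|].
  rewrite <- exp_0. apply exp_monotone.
  assert (0 <= ln (znorm k)) by (rewrite <- ln_1; apply ln_le; lra). nra.
Qed.

Lemma Lam_mult_le_1 s t j m : s <= 0 -> t <= 0 -> Lam s j * Lam t m <= 1.
Proof.
  intros Hs Ht. pose proof (Lam_le_1 s j Hs). pose proof (Lam_le_1 t m Ht).
  pose proof (Lam_nonneg s j). pose proof (Lam_nonneg t m). nra.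
Qed.

Lemma Cauchy_Schwarz3 x1 x2 x3 y1 y2 y3 :
  x1 * y1 + x2 * y2 + x3 * y3 <= sqrt (x1 ^ 2 + x2 ^ 2 + x3 ^ 2) * sqrt (y1 ^ 2 + y2 ^ 2 + y3 ^ 2).
Proof.
  rewrite <- sqrt_mult by nra. eapply Rle_trans; [apply Rle_abs|].
  rewrite <- sqrt_Rsqr_abs. apply sqrt_le_1_alt. unfold Rsqr.
  assert ((x1^2+x2^2+x3^2)*(y1^2+y2^2+y3^2) - (x1*y1+x2*y2+x3*y3)*(x1*y1+x2*y2+x3*y3) =
          (x1*y2 - x2*y1)^2 + (x1*y3 - x3*y1)^2 + (x2*y3 - x3*y2)^2) by ring.
  pose proof (pow2_ge_0 (x1*y2 - x2*y1)). pose proof (pow2_ge_0 (x1*y3 - x3*y1)).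
  pose proof (pow2_ge_0 (x2*y3 - x3*y2)). lra.
Qed.

Lemma Minkowski3 x1 x2 x3 y1 y2 y3 :
  sqrt ((x1 + y1) ^ 2 + (x2 + y2) ^ 2 + (x3 + y3) ^ 2) <=
  sqrt (x1 ^ 2 + x2 ^ 2 + x3 ^ 2) + sqrt (y1 ^ 2 + y2 ^ 2 + y3 ^ 2).
Proof.
  pose proof (Cauchy_Schwarz3 x1 x2 x3 y1 y2 y3) as CS.
  set (X := x1 ^ 2 + x2 ^ 2 + x3 ^ 2) in *. set (Y := y1 ^ 2 + y2 ^ 2 + y3 ^ 2) in *.
  assert (0 <= X) by (unfold X; nra). assert (0 <= Y) by (unfold Y; nra).
  pose proof (sqrt_pos X). pose proof (sqrt_pos Y).
  rewrite <- (sqrt_Rsqr (sqrt X + sqrt Y)) by lra.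
  apply sqrt_le_1_alt. unfold Rsqr.
  pose proof (sqrt_sqrt X H). pose proof (sqrt_sqrt Y H0). unfold X, Y in *. nra.
Qed.

Lemma znorm_triangle k j : znorm k <= znorm j + znorm (zsub k j).
Proof.
  destruct k as [[a b] c], j as [[x y] z]. unfold znorm, zsub. rewrite !minus_IZR.
  pose proof (Minkowski3 (IZR x) (IZR y) (IZR z) (IZR a - IZR x) (IZR b - IZR y) (IZR c - IZR z)).
  replace (IZR x + (IZR a - IZR x)) with (IZR a) in H by ring.
  replace (IZR y + (IZR b - IZR y)) with (IZR b) in H by ring.
  replace (IZR z + (IZR c - IZR z)) with (IZR c) in H by ring.
  exact H.
Qed.

Lemma Rabs_coord_le_znorm a b c :
  Rabs (IZR a) <= znorm (a, b, c) /\ Rabs (IZR b) <= znorm (a, b, c) /\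
  Rabs (IZR c) <= znorm (a, b, c).
Proof.
  unfold znorm. pose proof (pow2_ge_0 (IZR a)). pose proof (pow2_ge_0 (IZR b)).
  pose proof (pow2_ge_0 (IZR c)).
  repeat split; rewrite <- sqrt_Rsqr_abs; apply sqrt_le_1_alt; unfold Rsqr; nra.
Qed.

(** * Summability of |k|^(-p) for p > 3 *)

Lemma power_telescoping_le d x : 0 < d -> 0 < x ->
  d * exp (- (1 + d) * ln (x + 1)) <= exp (- d * ln x) - exp (- d * ln (x + 1)).
Proof.
  intros Hd Hx. set (L1 := ln x). set (L2 := ln (x + 1)).
  assert (HL : L1 - L2 <= - / (x + 1)).
  { unfold L1, L2. replace x with (x / (x + 1) * (x + 1)) at 1 by (field; lra).
    assert (0 < x / (x + 1)) by (apply Rdiv_lt_0_compat; lra).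
    rewrite ln_mult by lra.
    assert (ln (x / (x + 1)) <= x / (x + 1) - 1)
      by (pose proof (exp_ineq1_le (ln (x / (x + 1)))); rewrite exp_ln in H0; lra).
    replace (x / (x + 1) - 1) with (- / (x + 1)) in H0 by (field; lra). lra. }
  assert (E1 : exp (- d * L1) = exp (- d * L2) * exp (d * (L2 - L1)))
    by (rewrite <- exp_plus; f_equal; ring).
  assert (E2 : exp (- (1 + d) * L2) = exp (- d * L2) * / (x + 1)).
  { replace (- (1 + d) * L2) with (- d * L2 + - L2) by ring.
    rewrite exp_plus, exp_Ropp. unfold L2. rewrite exp_ln; lra. }
  assert (H3 : 1 + d * / (x + 1) <= exp (d * (L2 - L1))).
  { eapply Rle_trans; [|apply exp_ineq1_le]. nra. }
  rewrite E1, E2. pose proof (exp_pos (- d * L2)). nra.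
Qed.

Definition decay1 (q : R) (z : Z) : R := exp (- q * ln (1 + Rabs (IZR z))).

Lemma decay1_pos q z : 0 < decay1 q z.
Proof. apply exp_pos. Qed.

Lemma lsum_decay1_zrange_le d N : 0 < d ->
  lsum (decay1 (1 + d)) (zrange N) <= 1 + 2 / d * (1 - exp (- d * ln (INR N + 1))).
Proof.
  intros Hd. induction N.
  - simpl. unfold decay1. rewrite Rabs_R0, !Rplus_0_r, !Rplus_0_l, ln_1, !Rmult_0_r, exp_0. lra.
  - rewrite zrange_S, lsum_app, lsum_cons. cbn [lsum fold_right].
    assert (Hend : forall z, Rabs (IZR z) = INR (S N) ->
                   decay1 (1 + d) z = exp (- (1 + d) * ln ((INR N + 1) + 1))).
    { intros z Hz. unfold decay1. rewrite Hz, S_INR. do 3 f_equal. ring. }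
    rewrite !Hend.
    2: { rewrite <- INR_IZR_INZ. apply Rabs_pos_eq, pos_INR. }
    2: { rewrite opp_IZR, Rabs_Ropp, <- INR_IZR_INZ. apply Rabs_pos_eq, pos_INR. }
    pose proof (pos_INR N). rewrite S_INR.
    pose proof (power_telescoping_le d (INR N + 1) Hd ltac:(lra)) as T.
    apply Rmult_le_compat_l with (r := 2 / d) in T; [|left; apply Rdiv_lt_0_compat; lra].
    replace (2 / d * (d * exp (- (1 + d) * ln (INR N + 1 + 1))))
      with (2 * exp (- (1 + d) * ln (INR N + 1 + 1))) in T by (field; lra).
    lra.
Qed.

Lemma lsum_decay1_le d N : 0 < d -> lsum (decay1 (1 + d)) (zrange N) <= 1 + 2 / d.
Proof.
  intros Hd. eapply Rle_trans; [apply lsum_decay1_zrange_le; auto|].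
  pose proof (exp_pos (- d * ln (INR N + 1))).
  assert (0 < 2 / d) by (apply Rdiv_lt_0_compat; lra). nra.
Qed.

Definition decay3 (q : R) (m : Z3) : R :=
  let '(a, b, c) := m in decay1 q a * decay1 q b * decay1 q c.

Lemma decay3_pos q m : 0 < decay3 q m.
Proof.
  destruct m as [[a b] c]. pose proof (decay1_pos q a). pose proof (decay1_pos q b).
  pose proof (decay1_pos q c). simpl. repeat apply Rmult_lt_0_compat; auto.
Qed.

Lemma rsum_cube_decay3 q N : rsum_cube (decay3 q) N = lsum (decay1 q) (zrange N) ^ 3.
Proof.
  rewrite rsum_cube_lsum. unfold cube. rewrite lsum_flat_map.
  set (S0 := lsum (decay1 q) (zrange N)).
  transitivity (lsum (fun a => S0 * S0 * decay1 q a) (zrange N));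
    [|rewrite lsum_scal; fold S0; ring].
  apply lsum_ext. intros a _. rewrite lsum_flat_map.
  transitivity (lsum (fun b => (S0 * decay1 q a) * decay1 q b) (zrange N));
    [|rewrite lsum_scal; fold S0; ring].
  apply lsum_ext. intros b _. rewrite lsum_map.
  transitivity (lsum (fun c => (decay1 q a * decay1 q b) * decay1 q c) (zrange N));
    [reflexivity | rewrite lsum_scal; fold S0; ring].
Qed.

(* For k <> 0 each 1 + |k_i| is at most 2|k|. *)
Lemma Lam_le_decay3 q m : 0 < q -> Lam (- (3 * q)) m <= exp (3 * q * ln 2) * decay3 q m.
Proof.
  intros Hq. pose proof (decay3_pos q m). pose proof (exp_pos (3 * q * ln 2)).
  destruct m as [[a b] c].
  destruct (Lam_spec (a, b, c)) as [[H1 _]|[Hn H1]]; rewrite H1; [nra|].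
  unfold decay3, decay1. rewrite <- !exp_plus. apply exp_monotone.
  destruct (Rabs_coord_le_znorm a b c) as (Ha & Hb & Hc).
  set (n := znorm (a, b, c)) in *.
  assert (Hl : forall t, 0 <= t -> t <= n -> ln (1 + t) <= ln 2 + ln n)
    by (intros t Ht Htn; rewrite <- ln_mult by lra; apply ln_le; lra).
  pose proof (Hl _ (Rabs_pos _) Ha). pose proof (Hl _ (Rabs_pos _) Hb).
  pose proof (Hl _ (Rabs_pos _) Hc). nra.
Qed.

Lemma Lam_summable p : 3 < p ->
  exists Z, 0 < Z /\ forall L, NoDup L -> lsum (Lam (- p)) L <= Z.
Proof.
  intros Hp. set (q := p / 3). assert (Hq : 1 < q) by (unfold q; lra).
  exists (exp (3 * q * ln 2) * (1 + 2 / (q - 1)) ^ 3). split.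
  { apply Rmult_lt_0_compat; [apply exp_pos|]. apply pow_lt.
    assert (0 < 2 / (q - 1)) by (apply Rdiv_lt_0_compat; lra). lra. }
  intros L HL. destruct (incl_cube L) as [N HN].
  replace p with (3 * q) by (unfold q; field).
  eapply Rle_trans; [apply lsum_le; intros m _; apply (Lam_le_decay3 q m); lra|].
  eapply Rle_trans; [apply lsum_le_incl; eauto; intros m; pose proof (exp_pos (3 * q * ln 2));
                     pose proof (decay3_pos q m); nra|].
  rewrite lsum_scal. apply Rmult_le_compat_l; [left; apply exp_pos|].
  rewrite <- rsum_cube_lsum, rsum_cube_decay3.
  replace q with (1 + (q - 1)) at 1 by ring.
  apply pow_incr. split; [apply lsum_nonneg; intros; left; apply decay1_pos|].
  apply lsum_decay1_le. lra.
Qed.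

(** * The convolution weight *)

(* If z <= x + y then z <= 2 max(x, y), and the exponent s + e of the larger of x, y is <= 0. *)
Lemma power_weight_sq_le x y z s e :
  1 <= x -> 1 <= y -> 1 <= z -> z <= x + y -> 0 < s -> s + e <= 0 ->
  (exp (s * ln z) * (exp (e * ln x) * exp (- s * ln y))) ^ 2 <=
  exp (2 * s * ln 2) * (exp (2 * e * ln x) + exp (2 * e * ln y)).
Proof.
  intros Hx Hy Hz Hxy Hs Hse.
  rewrite <- !exp_plus, Rmult_plus_distr_l, <- !exp_plus.
  replace (exp (s * ln z + (e * ln x + - s * ln y)) ^ 2)
    with (exp (2 * (s * ln z + (e * ln x + - s * ln y))))
    by (simpl; rewrite Rmult_1_r, <- exp_plus; f_equal; ring).
  pose proof (exp_pos (2 * s * ln 2 + 2 * e * ln x)).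
  pose proof (exp_pos (2 * s * ln 2 + 2 * e * ln y)).
  destruct (Rle_dec x y) as [Hle|Hle].
  - assert (ln z <= ln 2 + ln y) by (rewrite <- ln_mult by lra; apply ln_le; lra).
    enough (exp (2 * (s * ln z + (e * ln x + - s * ln y))) <= exp (2 * s * ln 2 + 2 * e * ln x))
      by lra.
    apply exp_monotone. nra.
  - assert (ln z <= ln 2 + ln x) by (rewrite <- ln_mult by lra; apply ln_le; lra).
    assert (ln y <= ln x) by (apply ln_le; lra).
    enough (exp (2 * (s * ln z + (e * ln x + - s * ln y))) <= exp (2 * s * ln 2 + 2 * e * ln y))
      by lra.
    apply exp_monotone. nra.
Qed.

Lemma Lam_weight_sq_le s e k j : 0 < s -> s + e <= 0 ->
  (Lam s k * (Lam e j * Lam (- s) (zsub k j))) ^ 2 <=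
  exp (2 * s * ln 2) * (Lam (2 * e) j + Lam (2 * e) (zsub k j)).
Proof.
  intros Hs Hse.
  pose proof (exp_pos (2 * s * ln 2)).
  pose proof (Lam_nonneg (2 * e) j). pose proof (Lam_nonneg (2 * e) (zsub k j)).
  destruct (Lam_spec k) as [[Hk _]|[Hk1 Hk]]; [rewrite Hk; simpl; nra|].
  destruct (Lam_spec j) as [[Hj _]|[Hj1 Hj]]; [rewrite Hj; simpl; nra|].
  destruct (Lam_spec (zsub k j)) as [[Hm _]|[Hm1 Hm]]; [rewrite Hm; simpl; nra|].
  rewrite Hk, !Hj, !Hm. apply power_weight_sq_le; auto using znorm_triangle.
Qed.

Lemma weight_l2_bounded s e : 0 < s -> s + e <= 0 -> 3 < - (2 * e) ->
  exists K, 0 < K /\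
    forall k, l2_bounded (fun j => Lam s k * (Lam e j * Lam (- s) (zsub k j))) K.
Proof.
  intros Hs Hse He. destruct (Lam_summable _ He) as (Z & Z_pos & HZ).
  rewrite Ropp_involutive in HZ.
  pose proof (exp_pos (2 * s * ln 2)).
  exists (sqrt (exp (2 * s * ln 2) * (Z + Z))). split; [apply sqrt_lt_R0; nra|].
  intros k L HL. rewrite pow2_sqrt by nra.
  eapply Rle_trans; [apply lsum_le; intros j _; apply Lam_weight_sq_le; auto|].
  rewrite lsum_scal, lsum_plus. apply Rmult_le_compat_l; [lra|].
  apply Rplus_le_compat; [apply HZ; auto|].
  rewrite <- (lsum_map (Lam (2 * e))). apply HZ.
  apply FinFun.Injective_map_NoDup; auto using zsub_injective_r.
Qed.

(** * Bilinear estimate for a weighted convolution *)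

Section Weighted_convolution.

Variables (F : Z3 -> Z3 -> C) (a b c w : Z3 -> R) (V : Z3 -> Z3 -> R) (A B Cn K : R).
Hypotheses (a_ge0 : forall j, 0 <= a j) (b_ge0 : forall m, 0 <= b m)
  (c_ge0 : forall k, 0 <= c k) (w_ge0 : forall k, 0 <= w k)
  (V_le1 : forall k j, V k j <= 1).
Hypotheses (A_ge0 : 0 <= A) (B_ge0 : 0 <= B) (Cn_ge0 : 0 <= Cn) (K_ge0 : 0 <= K).
Hypotheses (a_l2 : l2_bounded a A) (b_l2 : l2_bounded b B) (c_l2 : l2_bounded c Cn)
  (W_l2 : forall k, l2_bounded (fun j => w k * V k j) K).
Hypothesis F_le : forall k j, Cmod (F k j) <= a j * b (zsub k j) * V k j.

Lemma conv_abs_summable k N : rsum_cube (fun j => Cmod (F k j)) N <= A * B.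
Proof.
  eapply Rle_trans; [apply (lsum_le _ (fun j => a j * b (zsub k j))); intros j _|].
  { eapply Rle_trans; [apply F_le|].
    assert (0 <= a j * b (zsub k j)) by (apply Rmult_le_pos; auto).
    pose proof (V_le1 k j). nra. }
  apply lsum_mult_le_l2; auto using NoDup_cube.
  apply l2_bounded_comp_inj; auto using zsub_injective_r.
Qed.

Lemma conv_sq_summable k : summable_nonneg (fun j => (a j * b (zsub k j)) ^ 2).
Proof.
  split; [intros; apply pow2_ge_0|]. exists (B ^ 2 * A ^ 2). intros N.
  eapply Rle_trans; [apply (lsum_le _ (fun j => B ^ 2 * a j ^ 2)); intros j _|].
  { rewrite Rpow_mult_distr, Rmult_comm.
    apply Rmult_le_compat_r; [apply pow2_ge_0 | apply l2_bounded_pointwise, b_l2]. }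
  rewrite lsum_scal. apply Rmult_le_compat_l; [apply pow2_ge_0 | apply a_l2, NoDup_cube].
Qed.

Let D k := zsumR (fun j => (a j * b (zsub k j)) ^ 2).

Lemma weighted_coef_le k : w k * Cmod (zsumC (F k)) <= sqrt 2 * (K * sqrt (D k)).
Proof.
  pose proof (sqrt_pos 2). pose proof (sqrt_pos (D k)).
  destruct (w_ge0 k) as [w_pos|w0]; [|rewrite <- w0, Rmult_0_l; repeat apply Rmult_le_pos; auto].
  enough (Cmod (zsumC (F k)) <= sqrt 2 * (K * sqrt (D k) / w k)).
  { apply Rmult_le_compat_l with (r := w k) in H1; [|lra].
    eapply Rle_trans; [exact H1 | right; field; lra]. }
  apply Cmod_zsumC_le. intros N. apply Rmult_le_reg_l with (w k); auto.
  replace (w k * (K * sqrt (D k) / w k)) with (sqrt (D k) * K) by (field; lra).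
  rewrite rsum_cube_lsum, <- lsum_scal.
  eapply Rle_trans; [apply (lsum_le _ (fun j => (a j * b (zsub k j)) * (w k * V k j)))|].
  { intros j _. pose proof (F_le k j).
    replace (a j * b (zsub k j) * (w k * V k j)) with (w k * (a j * b (zsub k j) * V k j)) by ring.
    apply Rmult_le_compat_l; lra. }
  eapply Rle_trans; [apply lsum_Cauchy_Schwarz|].
  apply Rmult_le_compat; try apply sqrt_pos.
  - apply sqrt_le_1_alt, lsum_le_zsumR; auto using conv_sq_summable, NoDup_cube.
  - rewrite <- (sqrt_pow2 K) by auto. apply sqrt_le_1_alt, W_l2, NoDup_cube.
Qed.

(* sum_k sum_j a_j^2 b_(k-j)^2 = sum_j a_j^2 sum_k b_(k-j)^2 <= A^2 B^2 *)
Lemma lsum_D_le L : NoDup L -> lsum D L <= (A * B) ^ 2.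
Proof.
  intros HL. apply lsum_zsumR_le; [intros; apply conv_sq_summable|]. intros N.
  rewrite (lsum_ext _ (fun k => lsum (fun j => (a j * b (zsub k j)) ^ 2) (cube N)))
    by reflexivity.
  rewrite lsum_swap.
  eapply Rle_trans; [apply (lsum_le _ (fun j => B ^ 2 * a j ^ 2)); intros j _|].
  { rewrite (lsum_ext _ (fun k => a j ^ 2 * b (zsub k j) ^ 2)) by (intros; apply Rpow_mult_distr).
    rewrite lsum_scal, Rmult_comm. apply Rmult_le_compat_r; [apply pow2_ge_0|].
    apply (l2_bounded_comp_inj b B _ (zsub_injective_l j) b_l2 L HL). }
  rewrite lsum_scal, Rpow_mult_distr, Rmult_comm.
  apply Rmult_le_compat_r; [apply pow2_ge_0 | apply a_l2, NoDup_cube].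
Qed.

Lemma pairing_partial_sums_le N :
  rsum_cube (fun k => w k * Cmod (zsumC (F k)) * c k) N <= sqrt 2 * K * (A * B * Cn).
Proof.
  pose proof (sqrt_pos 2).
  eapply Rle_trans; [apply (lsum_le _ (fun k => sqrt 2 * K * (sqrt (D k) * c k))); intros k _|].
  { pose proof (weighted_coef_le k). pose proof (c_ge0 k).
    replace (sqrt 2 * K * (sqrt (D k) * c k)) with (sqrt 2 * (K * sqrt (D k)) * c k) by ring.
    apply Rmult_le_compat_r; auto. }
  rewrite lsum_scal. apply Rmult_le_compat_l; [nra|].
  apply lsum_mult_le_l2; auto using NoDup_cube; [nra|].
  intros L HL. rewrite (lsum_ext _ D) by (intros; apply pow2_sqrt, zsumR_nonneg, conv_sq_summable).
  apply lsum_D_le; auto.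
Qed.

Theorem weighted_convolution_bounds :
  (forall k N, rsum_cube (fun j => Cmod (F k j)) N <= A * B) /\
  (forall N, rsum_cube (fun k => w k * Cmod (zsumC (F k)) * c k) N <= sqrt 2 * K * (A * B * Cn)).
Proof. split; [apply conv_abs_summable | apply pairing_partial_sums_le]. Qed.

End Weighted_convolution.

Lemma Cmod_vdot_le u m : Cmod (vdot u m) <= sqrt (vmod2 u) * znorm m.
Proof.
  destruct u as [[x y] z], m as [[a b] c]. unfold vdot, vmod2, znorm.
  eapply Rle_trans; [apply Cmod_triangle|].
  eapply Rle_trans; [apply Rplus_le_compat_r, Cmod_triangle|].
  rewrite !Cmod_mult, !Cmod_R.
  eapply Rle_trans; [apply Cauchy_Schwarz3|]. rewrite !pow2_abs. lra.
Qed.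

(* Splitting |j|^(-2 alpha) = |j|^p |j|^(-2 alpha - p) and |k-j| = |k-j|^t |k-j|^(-(t-1)). *)
Lemma Cmod_conv_term_le alpha p t v theta k j :
  Cmod (conv_term alpha v theta k j) <=
  (sqrt (vmod2 (v j)) * Lam p j) * (Cmod (theta (zsub k j)) * Lam t (zsub k j)) *
  (Lam (-2 * alpha - p) j * Lam (- (t - 1)) (zsub k j)).
Proof.
  unfold conv_term. rewrite !Cmod_mult, Cmod_R, Cmod_Ci, Rabs_pos_eq by apply Lam_nonneg.
  replace ((sqrt (vmod2 (v j)) * Lam p j) * (Cmod (theta (zsub k j)) * Lam t (zsub k j)) *
           (Lam (-2 * alpha - p) j * Lam (- (t - 1)) (zsub k j)))
    with (Lam (-2 * alpha) j * (1 * (sqrt (vmod2 (v j)) * znorm (zsub k j)) *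
                                Cmod (theta (zsub k j)))).
  2: { replace (Lam (-2 * alpha) j) with (Lam p j * Lam (-2 * alpha - p) j)
         by (rewrite Lam_plus; f_equal; ring).
       replace (znorm (zsub k j)) with (Lam t (zsub k j) * Lam (- (t - 1)) (zsub k j))
         by (rewrite Lam_plus, <- Lam_1; f_equal; ring).
       ring. }
  pose proof (Lam_nonneg (-2 * alpha) j). pose proof (Cmod_ge_0 (theta (zsub k j))).
  pose proof (Cmod_vdot_le (v j) (zsub k j)).
  apply Rmult_le_compat_l; auto. apply Rmult_le_compat_r; auto. lra.
Qed.

Lemma Cmod_l2_integrand_Lam_apply s T f k :
  Cmod (l2_integrand T (Lam_apply (s + s) f) k) = Lam s k * Cmod (T k) * (Cmod (f k) * Lam s k).
Proof.
  unfold l2_integrand, Lam_apply.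
  rewrite Cmod_mult, Cmod_conj, Cmod_mult, Cmod_R, Rabs_pos_eq, <- Lam_plus by apply Lam_nonneg.
  ring.
Qed.

Lemma Cmod_l2_pair_le T G M :
  (forall N, rsum_cube (fun k => Cmod (l2_integrand T G k)) N <= M) ->
  Cmod (l2_pair T G) <= (2 * PI) ^ 3 * (sqrt 2 * M).
Proof.
  intros HM. assert (0 <= (2 * PI) ^ 3) by (apply pow_le; pose proof PI_RGT_0; lra).
  unfold l2_pair. rewrite Cmod_mult, Cmod_R, Rabs_pos_eq by auto.
  apply Rmult_le_compat_l; auto. apply Cmod_zsumC_le; auto.
Qed.

Lemma in_H_l2_bounded s f : in_H s f -> l2_bounded (fun m => Cmod (f m) * Lam s m) (Hnorm s f).
Proof.
  intros (_ & _ & M & HM) L HL.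
  assert (Hf : summable_nonneg (fun k => Cmod (f k) ^ 2 * Lam s k ^ 2)).
  { split; [intros; apply Rmult_le_pos; apply pow2_ge_0 | exists M; auto]. }
  unfold Hnorm. rewrite pow2_sqrt by (apply zsumR_nonneg; auto).
  rewrite (lsum_ext _ (fun k => Cmod (f k) ^ 2 * Lam s k ^ 2)) by (intros; apply Rpow_mult_distr).
  apply lsum_le_zsumR; auto.
Qed.

Lemma in_V_l2_bounded s v :
  in_V s v -> l2_bounded (fun j => sqrt (vmod2 (v j)) * Lam s j) (Vnorm s v).
Proof.
  intros (_ & _ & _ & M & HM) L HL.
  assert (vmod2_ge0 : forall u, 0 <= vmod2 u)
    by (intros [[x y] z]; unfold vmod2; pose proof (pow2_ge_0 (Cmod x));
        pose proof (pow2_ge_0 (Cmod y)); pose proof (pow2_ge_0 (Cmod z)); lra).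
  assert (Hv : summable_nonneg (fun k => vmod2 (v k) * Lam s k ^ 2)).
  { split; [intros; apply Rmult_le_pos; auto using pow2_ge_0 | exists M; auto]. }
  unfold Vnorm. rewrite pow2_sqrt by (apply zsumR_nonneg; auto).
  rewrite (lsum_ext _ (fun k => vmod2 (v k) * Lam s k ^ 2))
    by (intros; rewrite Rpow_mult_distr, pow2_sqrt; auto).
  apply lsum_le_zsumR; auto.
Qed.

Lemma transport_partial_sums_le alpha p t K v theta phi :
  -2 * alpha - p <= 0 -> 1 <= t -> 0 <= K ->
  (forall k, l2_bounded (fun j => Lam (t - 1) k *
                                  (Lam (-2 * alpha - p) j * Lam (- (t - 1)) (zsub k j))) K) ->
  in_V p v -> in_H t theta -> in_H (t - 1) phi ->
  (forall k N, rsum_cube (fun j => Cmod (conv_term alpha v theta k j)) N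
               <= Vnorm p v * Hnorm t theta) /\
  (forall N, rsum_cube (fun k => Cmod (l2_integrand (transport_coef alpha v theta)
                                                    (Lam_apply ((t - 1) + (t - 1)) phi) k)) N
             <= sqrt 2 * K * (Vnorm p v * Hnorm t theta * Hnorm (t - 1) phi)).
Proof.
  intros Hp Ht K_ge0 W_l2 Hv Htheta Hphi.
  destruct weighted_convolution_bounds with (F := conv_term alpha v theta)
    (a := fun j => sqrt (vmod2 (v j)) * Lam p j) (b := fun m => Cmod (theta m) * Lam t m)
    (c := fun k => Cmod (phi k) * Lam (t - 1) k) (w := Lam (t - 1))
    (V := fun k j => Lam (-2 * alpha - p) j * Lam (- (t - 1)) (zsub k j))
    (A := Vnorm p v) (B := Hnorm t theta) (Cn := Hnorm (t - 1) phi) (K := K)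
    as [Hconv Hpair].
  all: auto using in_V_l2_bounded, in_H_l2_bounded, Cmod_conv_term_le.
  all: try (intros; apply Lam_mult_le_1; lra).
  all: try (unfold Vnorm, Hnorm; apply sqrt_pos).
  all: intros; try apply Rmult_le_pos; auto using Lam_nonneg, Cmod_ge_0, sqrt_pos.
  split; auto. intros N.
  rewrite rsum_cube_lsum, (lsum_ext _ _ _ (fun k _ => Cmod_l2_integrand_Lam_apply _ _ _ k)).
  apply Hpair.
Qed.

Theorem lemma15 (alpha beta r : R) :
  1 / 2 < beta -> beta < 5 / 4 -> alpha + beta = 5 / 4 ->
  Rmax (2 * beta) (beta + 1) < r ->
  exists C0 : R, 0 < C0 /\
    forall (v : Z3 -> vec3) (theta phi : Z3 -> C),
      in_V (r - 1) v -> in_H (r - beta) theta -> in_H (r - beta - 1) phi ->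
      (forall k, abs_summable (conv_term alpha v theta k)) /\
      abs_summable (l2_integrand (transport_coef alpha v theta)
                                 (Lam_apply (2 * r - 2 * beta - 2) phi)) /\
      Cmod (l2_pair (transport_coef alpha v theta)
                    (Lam_apply (2 * r - 2 * beta - 2) phi))
        <= C0 * Vnorm (r - 1) v * Hnorm (r - beta) theta * Hnorm (r - beta - 1) phi.
Proof.
  intros _ beta_lt alpha_beta r_gt.
  pose proof (Rmax_l (2 * beta) (beta + 1)). pose proof (Rmax_r (2 * beta) (beta + 1)).
  destruct (weight_l2_bounded (r - beta - 1) (-2 * alpha - (r - 1))) as (K & K_pos & W_l2);
    [lra.. |].
  exists ((2 * PI) ^ 3 * (sqrt 2 * (sqrt 2 * K))). split.
  { pose proof PI_RGT_0. pose proof (sqrt_lt_R0 2 ltac:(lra)).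
    apply Rmult_lt_0_compat; [apply pow_lt; lra|]. repeat apply Rmult_lt_0_compat; lra. }
  intros v theta phi Hv Htheta Hphi.
  replace (2 * r - 2 * beta - 2) with ((r - beta - 1) + (r - beta - 1)) by ring.
  destruct (transport_partial_sums_le alpha (r - 1) (r - beta) K v theta phi)
    as [Hconv Hpair]; auto; try lra.
  split; [intros k; eexists; apply Hconv|].
  split; [eexists; apply Hpair|].
  eapply Rle_trans; [apply Cmod_l2_pair_le, Hpair | right; ring].
Qed.
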